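(* Let $h\ge2$ be an integer and let $G_h$ be the directed graph with vertices $s,t,u_1,\dots,u_h,v_1,\dots,v_h$ and arcs: $(u_j,u_{j+1})$ and $(v_j,v_{j+1})$ for $1\le j\le h-1$, each of weight $1$; and $(s,u_1),(u_h,s),(t,v_1),(v_h,t)$, and $(u_{i+1},v_i),(v_{i+1},u_i)$ for $1\le i\le h-1$, each of weight $+\infty$. Then the optimum value of the LP relaxation of $st$-Bi-Cut on $G_h$ equals $2(h-1)/h$, and every optimal solution $\mathbf{x}$ satisfies $x(u_i,u_{i+1})+x(v_i,v_{i+1})=2/h$ for all $1\le i\le h-1$, and hence $x_e\le 2/h$ for every arc $e$. Consequently, for every positive integer $\ell$, taking $h>2\ell$ gives a two-terminal instance of $\textsc{Dir-MC}$ for which no optimal solution of $\textsc{Dir-MC-Rel}$ is $1/\ell$-integral.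
   Context: The LP relaxation for two terminals $s,t$: minimize $\sum_e w_ex_e$ subject to $\sum_{e\in p}x_e\ge1$ for every directed $s$–$t$ path and every directed $t$–$s$ path $p$, and $x_e\ge0$; arcs of weight $+\infty$ contribute $0$ to the objective if $x_e=0$ and $+\infty$ otherwise (so any finite-cost solution has $x_e=0$ on them). A solution is $1/\ell$-integral if every $x_e$ is an integer multiple of $1/\ell$. *)

From HB Require Import structures.
From mathcomp Require Import all_boot all_order all_algebra.
Unset Printing Implicit Defensive.
Import Order.TTheory GRing.Theory Num.Theory.

(* Vertices of G_h:  inl false = s, inl true = t,
   inr (false, i) = u_(i+1), inr (true, i) = v_(i+1)   for i : 'I_h. *)
Definition vert (h : nat) : finType := (bool + bool * 'I_h)%type.

Definition s_ {h} : vert h := inl false.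
Definition t_ {h} : vert h := inl true.
Definition u_ {h} (i : 'I_h) : vert h := inr (false, i).
Definition v_ {h} (i : 'I_h) : vert h := inr (true, i).

Definition fin_arc (h : nat) : rel (vert h) := fun a b =>
  match a, b with
  | inr (c, i), inr (c', j) => (c == c') && (nat_of_ord j == i.+1)
  | _, _ => false
  end.

(* weight-+oo arcs: (s,u_1), (u_h,s), (t,v_1), (v_h,t),
   (u_(i+1), v_i), (v_(i+1), u_i) *)
Definition inf_arc (h : nat) : rel (vert h) := fun a b =>
  match a, b with
  | inl c, inr (c', j) => (c == c') && (nat_of_ord j == 0)
  | inr (c, i), inl c' => (c == c') && (nat_of_ord i == h.-1)
  | inr (c, i), inr (c', j) => (c != c') && (nat_of_ord i == j.+1)
  | _, _ => false
  end.


Definition gh_arc (h : nat) : rel (vert h) := fun a b => fin_arc h a b || inf_arc h a b.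

Definition dipath (h : nat) (a b : vert h) (p : seq (vert h)) : bool :=
  [&& path (gh_arc h) a p, uniq (a :: p) & last a p == b].

Local Open Scope ring_scope.

Definition path_sum {R : realFieldType} {h} (x : vert h -> vert h -> R)
    (a : vert h) (p : seq (vert h)) : R :=
  \sum_(e <- zip (a :: p) p) x e.1 e.2.

(* finite-cost feasible solutions of the st-Bi-Cut LP relaxation on G_h
   (arcs of weight +oo must carry 0 for the cost to be finite) *)
Definition bicut_feasible {R : realFieldType} (h : nat) (x : vert h -> vert h -> R) : Prop :=
  [/\ (forall a b, gh_arc h a b -> 0 <= x a b),
      (forall a b, inf_arc h a b -> x a b = 0),
      (forall p, dipath h s_ t_ p -> 1 <= path_sum x s_ p) &
      (forall p, dipath h t_ s_ p -> 1 <= path_sum x t_ p)].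

Definition bicut_cost {R : realFieldType} (h : nat) (x : vert h -> vert h -> R) : R :=
  \sum_(a : vert h) \sum_(b : vert h | fin_arc h a b) x a b.

Definition bicut_optimal {R : realFieldType} (h : nat) (x : vert h -> vert h -> R) : Prop :=
  bicut_feasible h x /\ forall y, bicut_feasible h y -> bicut_cost h x <= bicut_cost h y.

Definition frac_integral {R : realFieldType} (h l : nat) (x : vert h -> vert h -> R) : Prop :=
  forall a b, gh_arc h a b -> exists k : int, x a b = k%:~R / l%:R.

From HB Require Import structures.
From mathcomp Require Import all_boot all_order all_algebra.
From mathcomp Require Import ring lra zify.
Import Order.TTheory GRing.Theory Num.Theory.
Local Open Scope ring_scope.

(* Write h = n + 1 and call level i the pair of unit arcs (u_i, u_(i+1)), (v_i, v_(i+1)).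
   For 1 <= m <= n, the s-t path along the u-chain up to u_(m+1), across to v_m and along
   the v-chain to t, together with the symmetric t-s path, pays every level once and
   level m twice.  Summing these 2n path constraints gives h * cost >= 2n.  Putting 1/h on
   every unit arc attains this bound: the potential (fewest unit arcs from the source)/h
   grows by at most x_e along each arc and by 1 from one terminal to the other.  At an
   optimum all the summed constraints are tight, which pins every level to 2/h. *)

Section PathSum.
Context {R : realFieldType} {h : nat} (x : vert h -> vert h -> R).

Lemma path_sum_nil a : path_sum x a [::] = 0.
Proof. by rewrite /path_sum big_nil. Qed.

Lemma path_sum_cons a b p : path_sum x a (b :: p) = x a b + path_sum x b p.
Proof. by rewrite /path_sum /= big_cons. Qed.

Lemma path_sum_cat a p1 p2 :
  path_sum x a (p1 ++ p2) = path_sum x a p1 + path_sum x (last a p1) p2.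
Proof.
elim: p1 a => [|b p IH] a /=; first by rewrite path_sum_nil add0r.
by rewrite !path_sum_cons IH addrA.
Qed.

Lemma path_sum_iota (f : nat -> vert h) k len :
  path_sum x (f k) (map f (iota k.+1 len)) = \sum_(k <= i < k + len) x (f i) (f i.+1).
Proof.
elim: len k => [|len IH] k; first by rewrite addn0 big_geq ?path_sum_nil.
by rewrite /= path_sum_cons IH [in RHS]big_ltn ?addnS ?addSn //; lia.
Qed.

Lemma potential_le_path_sum (f : vert h -> R) a p :
  path (gh_arc h) a p -> (forall a b, gh_arc h a b -> f b <= f a + x a b) ->
  f (last a p) <= f a + path_sum x a p.
Proof.
move=> + hf; elim: p a => [|b p IH] a /=; first by rewrite path_sum_nil addr0.
case/andP=> hab hp; rewrite path_sum_cons addrA.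
by apply: le_trans (IH _ hp) _; rewrite lerD2r; apply: hf.
Qed.

Lemma path_sum_rcons a p b : path_sum x a (rcons p b) = path_sum x a p + x (last a p) b.
Proof. by rewrite -cats1 path_sum_cat path_sum_cons path_sum_nil addr0. Qed.

End PathSum.

Lemma path_iota (T : Type) (e : rel T) (f : nat -> T) k len :
  (forall i, (k <= i < k + len)%N -> e (f i) (f i.+1)) ->
  path e (f k) (map f (iota k.+1 len)).
Proof.
elim: len k => [|len IH] k he //=; apply/andP; split; first by apply: he; lia.
by apply: IH => i hi; apply: he; lia.
Qed.

Lemma last_iota (T : Type) (f : nat -> T) k len :
  last (f k) (map f (iota k.+1 len)) = f (k + len)%N.
Proof. by elim: len k => [|len IH] k; rewrite ?addn0 //= IH addSn addnS. Qed.

Section Ladder.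
Variable n : nat.

Local Notation G := (vert n.+1).

(* node false k = u_(k+1) and node true k = v_(k+1); [inord] makes it total in k. *)
Definition node (c : bool) (k : nat) : G := inr (c, inord k).

Lemma node_ord c (i : 'I_n.+1) : inr (c, i) = node c i.
Proof. by rewrite /node inord_val. Qed.

Lemma node_inj c c' i j : (i <= n)%N -> (j <= n)%N -> node c i = node c' j -> c = c' /\ i = j.
Proof. by move=> hi hj [-> /(congr1 val)] /=; rewrite !inordK. Qed.

Lemma inf_arc_start (c : bool) : inf_arc n.+1 (inl c) (node c 0).
Proof. by rewrite /= eqxx inordK. Qed.

Lemma inf_arc_cross c m : (m < n)%N -> inf_arc n.+1 (node c m.+1) (node (~~ c) m).
Proof. by move=> hm; rewrite /= !inordK ?eqxx ?andbT; [case: c | lia | lia]. Qed.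

Lemma inf_arc_end (c : bool) : inf_arc n.+1 (node c n) (inl c).
Proof. by rewrite /= eqxx inordK //= eqxx. Qed.

Lemma fin_arc_node c i : (i < n)%N -> fin_arc n.+1 (node c i) (node c i.+1).
Proof. by move=> hi; rewrite /= eqxx !inordK //; lia. Qed.

Lemma fin_inf_arc a b : inf_arc n.+1 a b -> fin_arc n.+1 a b = false.
Proof. by case: a b => [c0|[c0 i]] [c1|[c1 j]] //= /andP[/negbTE ->]. Qed.

Definition chain (c : bool) (k len : nat) : seq G := map (node c) (iota k len.+1).

Lemma chain_uniq c k len : (k + len <= n)%N -> uniq (chain c k len).
Proof.
move=> hk; rewrite map_inj_in_uniq ?iota_uniq // => i j.
by rewrite !mem_iota => hi hj /node_inj[]; lia.
Qed.

Lemma last_chain a c k len : last a (chain c k len) = node c (k + len).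
Proof. exact: last_iota. Qed.

Lemma path_chain a c k len : (k + len <= n)%N ->
  path (gh_arc n.+1) a (chain c k len) = gh_arc n.+1 a (node c k).
Proof.
move=> hk; rewrite /chain /= path_iota ?andbT // => i hi.
by rewrite /gh_arc fin_arc_node //; lia.
Qed.

Definition side (v : G) : option bool := if v is inr (c, _) then Some c else None.

Lemma side_chain c k len v : v \in chain c k len -> side v = Some c.
Proof. by case/mapP=> j _ ->. Qed.

Definition cross_path (c : bool) (m : nat) : seq G :=
  rcons (chain c 0 m.+1 ++ chain (~~ c) m (n - m)) (inl (~~ c)).

Lemma cross_path_uniq (c : bool) m : (m < n)%N -> uniq (inl c :: cross_path c m).
Proof.
move=> hm; rewrite /cross_path.
have uA : uniq (chain c 0 m.+1) by apply: chain_uniq; lia.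
have uB : uniq (chain (~~ c) m (n - m)) by apply: chain_uniq; lia.
have sA := @side_chain c 0 m.+1; have sB := @side_chain (~~ c) m (n - m).
set A := chain c _ _ in uA sA *; set B := chain _ _ _ in uB sB *; clearbody A B.
have notA c0 : (inl c0 \in A) = false by apply/negP => /sA.
have notB c0 : (inl c0 \in B) = false by apply/negP => /sB.
have disjAB : ~~ has (mem A) B.
  by apply/hasPn => v /sB hv; apply/negP => /sA; rewrite hv; case: (c).
rewrite cons_uniq rcons_uniq cat_uniq uA uB disjAB mem_rcons !mem_cat !inE !notA !notB.
by rewrite mem_cat notA notB; case: (c).
Qed.

Lemma cross_path_dipath (c : bool) m :
  (m < n)%N -> dipath n.+1 (inl c) (inl (~~ c)) (cross_path c m).
Proof.
move=> hm; rewrite /dipath cross_path_uniq // /cross_path last_rcons eqxx andbT.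
rewrite rcons_path cat_path last_chain !path_chain ?andbT; try lia.
rewrite last_cat !last_chain add0n (subnKC (ltnW hm)) /gh_arc.
by rewrite (inf_arc_start c) (inf_arc_cross c _ hm) (inf_arc_end (~~ c)) !orbT.
Qed.

(* The least number of unit arcs on a path from terminal c to v. *)
Definition potential (c : bool) (v : G) : nat :=
  match v with
  | inl c' => if c' == c then 0 else n.+1
  | inr (c', i) => i + (c' != c)
  end.

Lemma potential_arc c a b : gh_arc n.+1 a b ->
  (potential c b <= potential c a + fin_arc n.+1 a b)%N.
Proof.
rewrite /gh_arc; case: a b => [c0|[c0 i]] [c1|[c1 j]] //=;
  by case: c c0 c1 => [] [] [] /=; lia.
Qed.

Section LadderLP.
Variable R : realFieldType.
Implicit Type x : G -> G -> R.

Definition chain_arc x c i : R := x (node c i) (node c i.+1).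

Definition level x i : R := chain_arc x false i + chain_arc x true i.

Lemma path_sum_chain x a c k len :
  path_sum x a (chain c k len) = x a (node c k) + \sum_(k <= i < k + len) chain_arc x c i.
Proof. by rewrite /chain /= path_sum_cons path_sum_iota. Qed.

Lemma cross_path_sum x c m : (m < n)%N ->
  path_sum x (inl c) (cross_path c m) =
    x (inl c) (node c 0) + \sum_(0 <= i < m.+1) chain_arc x c i
    + x (node c m.+1) (node (~~ c) m) + \sum_(m <= i < n) chain_arc x (~~ c) i
    + x (node (~~ c) n) (inl (~~ c)).
Proof.
move=> hm; rewrite path_sum_rcons path_sum_cat !path_sum_chain last_cat !last_chain.
by rewrite add0n (subnKC (ltnW hm)) !addrA.
Qed.

Lemma feasible_cross_cut {x} (c : bool) m : bicut_feasible n.+1 x -> (m < n)%N ->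
  1 <= \sum_(0 <= i < m.+1) chain_arc x c i + \sum_(m <= i < n) chain_arc x (~~ c) i.
Proof.
case=> _ x_inf0 x_st x_ts hm.
have : 1 <= path_sum x (inl c) (cross_path c m).
  by case: c; [apply: x_ts | apply: x_st]; apply: cross_path_dipath.
rewrite cross_path_sum // (x_inf0 _ _ (inf_arc_start c)) (x_inf0 _ _ (inf_arc_cross c _ hm)).
by rewrite (x_inf0 _ _ (inf_arc_end (~~ c))) add0r !addr0.
Qed.

Lemma sum_level_split x m : (m < n)%N ->
  \sum_(i < n) level x i + level x m =
    \sum_(0 <= i < m.+1) level x i + \sum_(m <= i < n) level x i.
Proof.
move=> hm; rewrite -(big_mkord xpredT) (big_cat_nat (leq0n m) (ltnW hm)).
by rewrite big_nat_recr //= addrAC.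
Qed.

Lemma feasible_level_bound {x} m : bicut_feasible n.+1 x -> (m < n)%N ->
  2 <= \sum_(i < n) level x i + level x m.
Proof.
move=> hx hm; rewrite sum_level_split // /level !big_split /=.
have := feasible_cross_cut false m hx hm; have := feasible_cross_cut true m hx hm.
rewrite /=; lra.
Qed.

Lemma fin_arc_out_sum x (c : bool) (i : 'I_n.+1) :
  \sum_(b | fin_arc n.+1 (inr (c, i)) b) x (inr (c, i)) b =
    if (i < n)%N then chain_arc x c i else 0.
Proof.
case: ltnP => hi; last first.
  by rewrite big_pred0 // => -[//|[c' j]] /=; apply/andP => -[_ /eqP]; have := ltn_ord j; lia.
rewrite (big_pred1 (node c i.+1)) ?node_ord // => -[//|[c' j]] /=.
rewrite /node inord_val; apply/andP/eqP => [[/eqP <- /eqP hj]|[<- ->]].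
  by congr (inr (c, _)); apply: ord_inj; rewrite hj inordK.
by rewrite !inordK.
Qed.

Lemma bicut_cost_levels x : bicut_cost n.+1 x = \sum_(i < n) level x i.
Proof.
rewrite /bicut_cost big_sumType /= big1 ?add0r => [|c _]; last by rewrite big_pred0.
pose F (c : bool) (i : 'I_n.+1) := if (i < n)%N then chain_arc x c i else 0.
rewrite (eq_bigr (fun p => F p.1 p.2)) => [|[c i] _]; last exact: fin_arc_out_sum.
rewrite -(pair_big xpredT xpredT F) /= big_bool /= !big_ord_recr /= /F ltnn !addr0.
rewrite addrC -big_split /=.
by apply: eq_bigr => i _; rewrite ltn_ord.
Qed.

Lemma feasible_cost_lb {x} : bicut_feasible n.+1 x -> 2 * n%:R / n.+1%:R <= bicut_cost n.+1 x.
Proof.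
move=> hx; rewrite bicut_cost_levels ler_pdivrMr ?ltr0n //.
set C := \sum_(i < n) level x i.
have : \sum_(m < n) (2 : R) <= \sum_(m < n) (C + level x m).
  by apply: ler_sum => m _; apply: feasible_level_bound.
rewrite sumr_const card_ord [X in _ <= X -> _]big_split /= sumr_const card_ord -/C.
by rewrite -mulrSr -[2 *+ n]mulr_natr -[C *+ n.+1]mulr_natr.
Qed.

Definition uniform_sol : G -> G -> R := fun a b => (fin_arc n.+1 a b)%:R / n.+1%:R.

Lemma uniform_sol_feasible : bicut_feasible n.+1 uniform_sol.
Proof.
have pot_le (c : bool) p : dipath n.+1 (inl c) (inl (~~ c)) p ->
    1 <= path_sum uniform_sol (inl c) p.
  case/and3P=> hp _ /eqP hlast.
  pose f v := (potential c v)%:R / n.+1%:R : R.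
  have hf a b : gh_arc n.+1 a b -> f b <= f a + uniform_sol a b.
    move/(potential_arc c); rewrite -(ler_nat R) natrD => hab.
    by rewrite /uniform_sol -mulrDl ler_pM2r ?invr_gt0 ?ltr0n.
  have := potential_le_path_sum uniform_sol f _ _ hp hf.
  by rewrite hlast /f /= eqxx mul0r add0r; case: (c); rewrite /= divff ?pnatr_eq0.
split.
- by move=> a b _; rewrite /uniform_sol divr_ge0.
- by move=> a b /fin_inf_arc hab; rewrite /uniform_sol hab mul0r.
- exact: (pot_le false).
- exact: (pot_le true).
Qed.

Lemma uniform_sol_cost : bicut_cost n.+1 uniform_sol = 2 * n%:R / n.+1%:R.
Proof.
rewrite bicut_cost_levels (eq_bigr (fun=> 2 / n.+1%:R)) => [|i _].
  by rewrite sumr_const card_ord -[_ *+ n]mulr_natr mulrAC.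
rewrite /level /chain_arc /uniform_sol -mulrDl.
by rewrite (fin_arc_node false _ (ltn_ord i)) (fin_arc_node true _ (ltn_ord i)).
Qed.

Lemma optimal_cost {x} : bicut_optimal n.+1 x -> bicut_cost n.+1 x = 2 * n%:R / n.+1%:R.
Proof.
case=> hx hopt; apply/le_anti; rewrite feasible_cost_lb // andbT -uniform_sol_cost.
exact: hopt uniform_sol_feasible.
Qed.

Lemma optimal_level {x} m : bicut_optimal n.+1 x -> (m < n)%N -> level x m = 2 / n.+1%:R.
Proof.
move=> hopt hm; have [hx _] := hopt.
have hC : \sum_(i < n) level x i = 2 * n%:R / n.+1%:R.
  by rewrite -bicut_cost_levels optimal_cost.
have gap : 2 - 2 * n%:R / n.+1%:R = 2 / n.+1%:R :> R.
  by rewrite -(natr1 n); field; rewrite natr1 pnatr_eq0.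
have slack_ge0 (i : 'I_n) : true -> 0 <= level x i - 2 / n.+1%:R.
  by move=> _; rewrite subr_ge0 -gap lerBlDl -hC feasible_level_bound.
have slack_sum0 : \sum_(i < n) (level x i - 2 / n.+1%:R) = 0.
  by rewrite sumrB hC sumr_const card_ord -[(2 / _) *+ n]mulr_natr mulrAC subrr.
exact/subr0_eq/(@psumr_eq0P _ _ _ _ slack_ge0 slack_sum0 (Ordinal hm)).
Qed.

Lemma optimal_level_uv {x} (i j : 'I_n.+1) : bicut_optimal n.+1 x -> nat_of_ord j = i.+1 ->
  x (u_ i) (u_ j) + x (v_ i) (v_ j) = 2 / n.+1%:R.
Proof.
move=> hopt hj; rewrite /u_ /v_ !node_ord hj; apply: optimal_level hopt _.
by have := ltn_ord j; lia.
Qed.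

Lemma optimal_arc_le {x} a b : bicut_optimal n.+1 x -> gh_arc n.+1 a b -> x a b <= 2 / n.+1%:R.
Proof.
move=> hopt hab; have [[x_ge0 x_inf0 _ _] _] := hopt.
case/orP: (hab) => [|/x_inf0 ->]; last by rewrite divr_ge0.
case: a b hab => [//|[c i]] [//|[c' j]] hab /= /andP[/eqP <- /eqP hj].
rewrite -(optimal_level_uv _ _ hopt hj) /u_ /v_.
have arc_ge0 c0 : 0 <= x (inr (c0, i)) (inr (c0, j)).
  by apply: x_ge0; rewrite /gh_arc /= hj !eqxx.
by case: c hab; [rewrite lerDr | rewrite lerDl].
Qed.

Lemma optimal_not_frac_integral {x} l :
  bicut_optimal n.+1 x -> (0 < l)%N -> (2 * l < n.+1)%N ->
  ~ frac_integral n.+1 l x.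
Proof.
move=> hopt l_gt0 hl hfrac; have n_gt0 : (0 < n)%N by lia.
have unit_arc c : gh_arc n.+1 (node c 0) (node c 1) by rewrite /gh_arc fin_arc_node.
have := optimal_level 0 hopt n_gt0; rewrite /level /chain_arc.
have [k1 ->] := hfrac _ _ (unit_arc false); have [k2 ->] := hfrac _ _ (unit_arc true).
rewrite -mulrDl -intrD; set k := (k1 + k2)%R => hk.
have hkl : k%:~R = 2 / n.+1%:R * l%:R :> R by rewrite -hk divfK ?pnatr_eq0 -?lt0n.
have k_gt0 : (0 < k)%R by rewrite -(ltr0z R) hkl mulr_gt0 ?divr_gt0 ?ltr0n.
have k_lt1 : (k < 1)%R.
  by rewrite -(ltrz1 R) hkl mulrAC ltr_pdivrMr ?ltr0n // mul1r -natrM ltr_nat.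
lia.
Qed.

End LadderLP.

End Ladder.

Theorem mainTheorem12 (R : realFieldType) (h : nat) (hh : (2 <= h)%N) :
  [/\ (exists x : vert h -> vert h -> R,
          bicut_feasible h x /\ bicut_cost h x = 2 * (h.-1)%:R / h%:R),
      (forall x : vert h -> vert h -> R,
          bicut_feasible h x -> 2 * (h.-1)%:R / h%:R <= bicut_cost h x),
      (forall x : vert h -> vert h -> R, bicut_optimal h x ->
          forall i j : 'I_h, nat_of_ord j = i.+1 ->
            x (u_ i) (u_ j) + x (v_ i) (v_ j) = 2 / h%:R),
      (forall x : vert h -> vert h -> R, bicut_optimal h x ->
          forall a b, gh_arc h a b -> x a b <= 2 / h%:R) &
      (forall l : nat, (0 < l)%N -> (2 * l < h)%N ->
          forall x : vert h -> vert h -> R, bicut_optimal h x -> ~ frac_integral h l x)].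
Proof.
case: h hh => [//|n] _; split.
- by exists (uniform_sol n R); split; [exact: uniform_sol_feasible | exact: uniform_sol_cost].
- by move=> x; apply: feasible_cost_lb.
- by move=> x hopt i j; apply: optimal_level_uv.
- by move=> x hopt a b; apply: optimal_arc_le.
- by move=> l l_gt0 hl x hopt; apply: optimal_not_frac_integral.
Qed.
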